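(* There exist absolute constants $c>0$ and $k_0$ such that for every $k\ge k_0$ and every $f(x,y)\in\mathbb{C}[x,y]$ whose Newton polytope has exactly $k$ vertices, there exists $a\in\mathbb{C}\setminus\{0\}$ such that the real univariate polynomial $\Re(f(x,a))$ has at least $ck$ distinct real roots.
   Context: $\mathrm{Newt}(f)$ is the convex hull of $\{(i,j):a_{i,j}\ne0\}$ for $f=\sum a_{i,j}x^iy^j$. For a univariate complex polynomial $g(x)=\sum_ia_ix^i$, $\Re(g):=\sum_i\Re(a_i)x^i\in\mathbb{R}[x]$. *)

From Stdlib Require Import Reals List.
Import ListNotations.
Open Scope R_scope.

Definition Cx : Type := (R * R)%type.
Definition C0 : Cx := (0, 0).
Definition Cadd (z w : Cx) : Cx := (fst z + fst w, snd z + snd w).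
Definition Cmul (z w : Cx) : Cx :=
  (fst z * fst w - snd z * snd w, fst z * snd w + snd z * fst w).
Fixpoint Cpow (z : Cx) (n : nat) : Cx :=
  match n with O => (1, 0) | S m => Cmul z (Cpow z m) end.
Definition Re (z : Cx) : R := fst z.

(* csum f n = f 0 + ... + f n *)
Fixpoint csum (f : nat -> Cx) (n : nat) : Cx :=
  match n with O => f O | S m => Cadd (csum f m) (f (S m)) end.

(* A bivariate complex polynomial f = sum_{i,j} a i j x^i y^j is given by its
   coefficient function a together with a bound N such that a i j = 0
   whenever i > N or j > N. *)
Definition bounded_coefs (a : nat -> nat -> Cx) (N : nat) : Prop :=
  forall i j, (N < i)%nat \/ (N < j)%nat -> a i j = C0.

Definition support (a : nat -> nat -> Cx) (p : nat * nat) : Prop :=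
  a (fst p) (snd p) <> C0.

Definition in_conv_hull (P : nat * nat -> Prop) (p : nat * nat) : Prop :=
  exists l : list (R * (nat * nat)),
    Forall (fun wq => 0 <= fst wq /\ P (snd wq)) l /\
    fold_right Rplus 0 (map fst l) = 1 /\
    fold_right Rplus 0 (map (fun wq => fst wq * INR (fst (snd wq))) l) = INR (fst p) /\
    fold_right Rplus 0 (map (fun wq => fst wq * INR (snd (snd wq))) l) = INR (snd p).

(* Vertices (extreme points) of Newt(f) = conv(support): the points of the
   support not lying in the convex hull of the other support points. *)
Definition newton_vertex (a : nat -> nat -> Cx) (p : nat * nat) : Prop :=
  support a p /\ ~ in_conv_hull (fun q => support a q /\ q <> p) p.

Definition newton_num_vertices (a : nat -> nat -> Cx) (k : nat) : Prop :=
  exists l : list (nat * nat),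
    NoDup l /\ length l = k /\ (forall p, In p l <-> newton_vertex a p).

Definition coef_at (a : nat -> nat -> Cx) (N : nat) (y0 : Cx) (i : nat) : Cx :=
  csum (fun j => Cmul (a i j) (Cpow y0 j)) N.

Definition re_eval (a : nat -> nat -> Cx) (N : nat) (y0 : Cx) (x : R) : R :=
  sum_f_R0 (fun i => Re (coef_at a N y0 i) * x ^ i) N.

From Stdlib Require Import Reals List Lra Lia Classical ZArith Sorting.
From Coquelicot Require Coquelicot.
Import ListNotations.
Open Scope R_scope.

(* A vertex v is strictly separated from the other
      support points by a linear functional; perturbing and rounding it, v is
      the unique maximizer on the support of (i, j) |-> e i + sg W j for an
      integer e, a sign sg and every large W.  A row j = J carries at most two
      vertices, so at most two vertices lie on the axis j = 0.
   2. Chains.  At least half of the remaining vertices share the sign sg; for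
      a common W their exponents e are distinct, giving a chain
      e_1 < ... < e_m with m >= (k - 2)/2.  Two adjacent vertices of the
      chain on the same row force e_l < 0 < e_(l+1), so at most one adjacent
      pair lies on a single row.
   3. Averaging.  For two cosines of distinct positive frequencies, the mean
      over a period of (Q^2 - Q)/2, Q their product, is 1/8, and this
      statistic is at most the indicator of Q < 0.  Hence some angle t gives
      opposite signs to more than 1/16 of the adjacent pairs on distinct rows.
   4. Dominant terms.  For y0 = T^w e^(it) with w = sg W and T large, the sign
      of Re f(T^e_l, y0) is that of Re(a_(v_l) e^(i j_l t)), the vertex
      monomial dominating all others; the intermediate value theorem then
      yields a root between any two adjacent sign changes, i.e. more than
      (m - 2)/16 >= k/64 distinct positive roots once k >= 12. *)

Lemma exists_strict_upper_bound {A} (g : A -> R) (L : list A) :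
  exists lam, forall x, In x L -> g x < lam.
Proof.
  induction L as [|x L [lam IH]].
  - exists 0. intros x [].
  - exists (Rmax lam (g x + 1)). intros y [<-|Hy].
    + eapply Rlt_le_trans; [|apply Rmax_r]. lra.
    + eapply Rlt_le_trans; [apply IH; auto|apply Rmax_l].
Qed.

Lemma exists_positive_lower_bound {A} (g : A -> R) (L : list A) :
  (forall x, In x L -> 0 < g x) -> exists m, 0 < m /\ forall x, In x L -> m < g x.
Proof.
  induction L as [|x L IH]; intros H.
  - exists 1. split; [lra|intros x []].
  - destruct IH as [m [Hm HL]]; [intros; apply H; simpl; auto|].
    assert (Hx : 0 < g x) by (apply H; simpl; auto).
    exists (Rmin m (g x / 2)). split; [apply Rmin_glb_lt; lra|].
    intros y [<-|Hy].
    + eapply Rle_lt_trans; [apply Rmin_r|lra].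
    + eapply Rle_lt_trans; [apply Rmin_l|auto].
Qed.

(* Given g > 0 on L and c >= 0, one multiplier lam makes all f + lam g positive
   while keeping b - lam c positive, provided the compatibility conditions
   g x * b + c * f x > 0 hold (they say -f x / g x < b / c). *)
Lemma exists_multiplier {A} (L : list A) (f g : A -> R) (b c : R) :
  (forall x, In x L -> 0 < g x) -> 0 <= c -> (c = 0 -> 0 < b) ->
  (forall x, In x L -> 0 < g x * b + c * f x) ->
  exists lam, 0 < b - lam * c /\ forall x, In x L -> 0 < f x + lam * g x.
Proof.
  intros Hg Hc Hb Hcomp.
  destruct (Req_dec c 0) as [Hc0|Hc0].
  - destruct (exists_strict_upper_bound (fun x => - f x / g x) L) as [lam Hlam].
    exists lam. split; [rewrite Hc0; specialize (Hb Hc0); lra|].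
    intros x Hx. specialize (Hlam x Hx). specialize (Hg x Hx).
    apply (Rmult_lt_compat_r (g x)) in Hlam; [|lra].
    replace (- f x / g x * g x) with (- f x) in Hlam by (field; lra). lra.
  - destruct (exists_positive_lower_bound (fun x => b / c + f x / g x) L) as [m [Hm Hlow]].
    { intros x Hx. specialize (Hg x Hx). specialize (Hcomp x Hx).
      replace (b / c + f x / g x) with ((g x * b + c * f x) / (c * g x)) by (field; lra).
      apply Rdiv_lt_0_compat; [lra|apply Rmult_lt_0_compat; lra]. }
    exists (b / c - m). split.
    + replace (b - (b / c - m) * c) with (m * c) by (field; lra).
      apply Rmult_lt_0_compat; lra.
    + intros x Hx. specialize (Hg x Hx). specialize (Hlow x Hx).
      apply (Rmult_lt_compat_r (g x)) in Hlow; [|lra].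
      replace ((b / c + f x / g x) * g x) with (b / c * g x + f x) in Hlow by (field; lra).
      nra.
Qed.

Section Separation.
Variable P : Type.
Variables X Y : P -> R.
Variables vx vy : R.

Definition gap (w1 w2 : R) (q : P) : R := w1 * (vx - X q) + w2 * (vy - Y q).

Definition in_hull_of (L : list P) : Prop :=
  exists l : list (R * P), Forall (fun wq => 0 <= fst wq /\ In (snd wq) L) l /\
     fold_right Rplus 0 (map fst l) = 1 /\
     fold_right Rplus 0 (map (fun wq => fst wq * X (snd wq)) l) = vx /\
     fold_right Rplus 0 (map (fun wq => fst wq * Y (snd wq)) l) = vy.

Lemma in_hull_of_incl L L' : incl L L' -> in_hull_of L -> in_hull_of L'.
Proof.
  intros Hinc [l [Hl Hrest]]. exists l. split; auto.
  eapply Forall_impl; [|exact Hl]. intros wq [? ?]; split; auto.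
Qed.

Lemma orthogonal_to_frame_zero w1 w2 u1 u2 : ~ (w1 = 0 /\ w2 = 0) ->
  w1 * u1 + w2 * u2 = 0 -> - w2 * u1 + w1 * u2 = 0 -> u1 = 0 /\ u2 = 0.
Proof.
  intros Hw H1 H2.
  assert (Hn : w1 * w1 + w2 * w2 <> 0) by (intro E; apply Hw; split; nra).
  assert (E1 : u1 * (w1 * w1 + w2 * w2) = w1 * (w1 * u1 + w2 * u2) - w2 * (- w2 * u1 + w1 * u2))
    by ring.
  assert (E2 : u2 * (w1 * w1 + w2 * w2) = w2 * (w1 * u1 + w2 * u2) + w1 * (- w2 * u1 + w1 * u2))
    by ring.
  rewrite H1, H2 in E1, E2.
  split; apply (Rmult_eq_reg_r (w1 * w1 + w2 * w2)); lra.
Qed.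

(* Twist of q0 relative to q: the 2x2 determinant of the coordinates of
   v - q and v - q0 in the frame (w, w rotated by 90 degrees). *)
Definition twist (w1 w2 : R) (q q0 : P) : R :=
  gap w1 w2 q0 * gap (- w2) w1 q - gap w1 w2 q * gap (- w2) w1 q0.

Lemma hull_of_three w1 w2 q q1 q2 : ~ (w1 = 0 /\ w2 = 0) ->
  0 < gap w1 w2 q1 -> 0 < gap w1 w2 q2 -> gap w1 w2 q <= 0 ->
  0 <= twist w1 w2 q q1 -> twist w1 w2 q q2 <= 0 ->
  in_hull_of [q; q1; q2].
Proof.
  intros Hw Hq1 Hq2 Hq Ht1 Ht2.
  set (s0 := gap w1 w2 q) in *.
  set (t1 := twist w1 w2 q q1) in *. set (t2 := twist w1 w2 q q2) in *.
  set (g1 := if Rlt_dec 0 (t1 - t2) then - t2 else 1).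
  set (g2 := if Rlt_dec 0 (t1 - t2) then t1 else 0).
  assert (Hg : 0 <= g1 /\ 0 <= g2 /\ 0 < g1 + g2 /\ g1 * t1 + g2 * t2 = 0).
  { unfold g1, g2; destruct (Rlt_dec 0 (t1 - t2)); [repeat split; nra|].
    assert (t1 = 0) by lra. repeat split; nra. }
  destruct Hg as [Hg1 [Hg2 [Hg12 Hgt]]].
  set (c0 := g1 * gap w1 w2 q1 + g2 * gap w1 w2 q2).
  set (c1 := - g1 * s0). set (c2 := - g2 * s0).
  assert (Hc0 : 0 < c0).
  { unfold c0. destruct (Rlt_dec 0 g1); [|assert (0 < g2) by lra]; nra. }
  assert (Hc1 : 0 <= c1) by (unfold c1; nra).
  assert (Hc2 : 0 <= c2) by (unfold c2; nra).
  set (C := c0 + c1 + c2).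
  assert (HC : 0 < C) by (unfold C; lra).
  (* c0 (v - q) + c1 (v - q1) + c2 (v - q2) = 0 *)
  set (u1 := c0 * (vx - X q) + c1 * (vx - X q1) + c2 * (vx - X q2)).
  set (u2 := c0 * (vy - Y q) + c1 * (vy - Y q1) + c2 * (vy - Y q2)).
  assert (Hu : u1 = 0 /\ u2 = 0).
  { apply (orthogonal_to_frame_zero w1 w2); auto.
    - unfold u1, u2, c0, c1, c2, s0, gap. ring.
    - rewrite <- Hgt. unfold u1, u2, c0, c1, c2, t1, t2, twist, s0, gap. ring. }
  destruct Hu as [Hu1 Hu2].
  exists [(c0 / C, q); (c1 / C, q1); (c2 / C, q2)].
  assert (HCi : 0 < / C) by (apply Rinv_0_lt_compat; lra).
  split; [|split; [|split]]; simpl.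
  - repeat apply Forall_cons; try apply Forall_nil; simpl; unfold Rdiv; split; auto; nra.
  - unfold C. field. lra.
  - assert (E : c0 * X q + c1 * X q1 + c2 * X q2 = C * vx - u1) by (unfold u1, C; ring).
    rewrite Hu1, Rminus_0_r in E. apply (Rmult_eq_reg_r C); [|lra].
    rewrite (Rmult_comm vx C), <- E. field. lra.
  - assert (E : c0 * Y q + c1 * Y q1 + c2 * Y q2 = C * vy - u2) by (unfold u2, C; ring).
    rewrite Hu2, Rminus_0_r in E. apply (Rmult_eq_reg_r C); [|lra].
    rewrite (Rmult_comm vy C), <- E. field. lra.
Qed.

Lemma rotate_separator w1 w2 q L sg : L <> [] ->
  (forall q0, In q0 L -> 0 < gap w1 w2 q0) -> gap w1 w2 q <= 0 ->
  (forall q0, In q0 L -> 0 < sg * twist w1 w2 q q0) ->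
  exists w1' w2', forall q0, In q0 (q :: L) -> 0 < gap w1' w2' q0.
Proof.
  intros HL Hw Hq Htw.
  set (tdd := fun q0 => sg * gap (- w2) w1 q0).
  destruct (exists_multiplier L tdd (gap w1 w2) (tdd q) (- gap w1 w2 q))
    as [lam [Hlq HlL]]; auto; try lra.
  - intros Hc. destruct L as [|q' L']; [congruence|].
    specialize (Htw q' (or_introl eq_refl)). specialize (Hw q' (or_introl eq_refl)).
    assert (Hz : gap w1 w2 q = 0) by lra.
    unfold twist, tdd in *. rewrite Hz in Htw. nra.
  - intros q0 Hq0. specialize (Htw q0 Hq0). unfold twist, tdd in *. nra.
  - exists (- sg * w2 + lam * w1), (sg * w1 + lam * w2).
    intros q0 [<-|Hq0].
    + replace (gap _ _ q) with (tdd q - lam * - gap w1 w2 q) by (unfold tdd, gap; ring). lra.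
    + replace (gap _ _ q0) with (tdd q0 + lam * gap w1 w2 q0) by (unfold tdd, gap; ring).
      apply HlL; auto.
Qed.

Lemma separation (L : list P) :
  Forall (fun q => ~ (X q = vx /\ Y q = vy)) L ->
  (exists w1 w2, forall q, In q L -> 0 < gap w1 w2 q) \/ in_hull_of L.
Proof.
  induction L as [|q L IH]; intros HF.
  { left. exists 0, 0. intros q []. }
  inversion HF as [|? ? Hq HL]; subst.
  destruct L as [|q' L0].
  { left. exists (vx - X q), (vy - Y q). intros q0 [<-|[]]. unfold gap.
    destruct (Req_dec (vx - X q) 0) as [Ex|Ex]; [destruct (Req_dec (vy - Y q) 0) as [Ey|Ey]|].
    - exfalso; apply Hq; split; lra.
    - apply Rplus_le_lt_0_compat; [apply Rle_0_sqr|apply (Rsqr_pos_lt _ Ey)].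
    - apply Rplus_lt_le_0_compat; [apply (Rsqr_pos_lt _ Ex)|apply Rle_0_sqr]. }
  destruct (IH HL) as [[w1 [w2 Hw]]|Hh].
  2:{ right. revert Hh. apply in_hull_of_incl. intros x Hx; simpl; auto. }
  destruct (Rlt_dec 0 (gap w1 w2 q)) as [Hpos|Hnpos].
  { left. exists w1, w2. intros q0 [<-|Hq0]; auto. }
  assert (Hwne : ~ (w1 = 0 /\ w2 = 0)).
  { intros [-> ->]. specialize (Hw q' (or_introl eq_refl)). unfold gap in Hw. lra. }
  set (L := q' :: L0) in *.
  destruct (classic ((exists q1, In q1 L /\ 0 <= twist w1 w2 q q1) /\
                     (exists q2, In q2 L /\ twist w1 w2 q q2 <= 0)))
    as [[[q1 [Hq1 Ht1]] [q2 [Hq2 Ht2]]] | Hnot].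
  - right. apply (in_hull_of_incl [q; q1; q2]).
    + intros x [<-|[<-|[<-|[]]]]; simpl; auto.
    + apply (hull_of_three w1 w2); auto; lra.
  - left. destruct (classic (exists q1, In q1 L /\ 0 <= twist w1 w2 q q1)) as [He|Hne].
    + apply (rotate_separator w1 w2 q L 1); try discriminate; auto; [lra|].
      intros q0 Hq0. destruct (Rlt_dec 0 (twist w1 w2 q q0)); [lra|].
      exfalso. apply Hnot. split; auto. exists q0. split; auto; lra.
    + apply (rotate_separator w1 w2 q L (-1)); try discriminate; auto; [lra|].
      intros q0 Hq0. destruct (Rlt_dec (twist w1 w2 q q0) 0); [lra|].
      exfalso. apply Hne. exists q0. split; auto; lra.
Qed.
End Separation.

Definition Cx_eq_dec (z w : Cx) : {z = w} + {z <> w}.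
Proof.
  destruct z as [x1 y1], w as [x2 y2].
  destruct (Req_EM_T x1 x2) as [->|H1]; [|right; congruence].
  destruct (Req_EM_T y1 y2) as [->|H2]; [left; reflexivity|right; congruence].
Defined.

Definition pair_eq_dec (p q : nat * nat) : {p = q} + {p <> q}.
Proof. decide equality; apply Nat.eq_dec. Defined.

Definition grid (N : nat) : list (nat * nat) := list_prod (seq 0 (S N)) (seq 0 (S N)).

Definition support_list (a : nat -> nat -> Cx) (N : nat) : list (nat * nat) :=
  filter (fun p => if Cx_eq_dec (a (fst p) (snd p)) C0 then false else true) (grid N).

Lemma in_grid N i j : (i <= N)%nat -> (j <= N)%nat -> In (i, j) (grid N).
Proof. intros Hi Hj. apply in_prod; apply in_seq; lia. Qed.

Lemma support_bounded a N p : bounded_coefs a N -> support a p ->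
  (fst p <= N)%nat /\ (snd p <= N)%nat.
Proof.
  intros Hb Hs. destruct (le_lt_dec (fst p) N); destruct (le_lt_dec (snd p) N); auto;
    exfalso; apply Hs; apply Hb; auto.
Qed.

Definition other_support (a : nat -> nat -> Cx) (N : nat) (v : nat * nat) :=
  filter (fun q => if pair_eq_dec q v then false else true) (support_list a N).

Lemma in_support_list a N p : bounded_coefs a N -> In p (support_list a N) <-> support a p.
Proof.
  intros Hb. unfold support_list. rewrite filter_In.
  destruct (Cx_eq_dec (a (fst p) (snd p)) C0) as [E|E]; split.
  - intros [_ H]; discriminate.
  - intros H; contradiction.
  - intros _; exact E.
  - intros Hs. split; auto. destruct (support_bounded a N p Hb Hs). destruct p; apply in_grid; auto.
Qed.

Lemma in_other_support a N v q : bounded_coefs a N ->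
  In q (other_support a N v) <-> support a q /\ q <> v.
Proof.
  intros Hb. unfold other_support. rewrite filter_In, in_support_list by auto.
  destruct (pair_eq_dec q v); split; intros [? ?]; try discriminate; try contradiction; auto.
Qed.

Lemma vertex_separating_functional a N v : bounded_coefs a N -> newton_vertex a v ->
  exists w1 w2 m, 0 < m /\ forall q, support a q -> q <> v ->
    m < w1 * (INR (fst v) - INR (fst q)) + w2 * (INR (snd v) - INR (snd q)).
Proof.
  intros Hb [Hsv Hnv].
  set (L := other_support a N v).
  destruct (separation (nat * nat) (fun q => INR (fst q)) (fun q => INR (snd q))
              (INR (fst v)) (INR (snd v)) L) as [[w1 [w2 Hw]]|Hh].
  - apply Forall_forall. intros q Hq [E1 E2].
    apply in_other_support in Hq as [_ Hq]; auto. apply Hq.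
    apply INR_eq in E1. apply INR_eq in E2. destruct q, v; simpl in *; congruence.
  - destruct (exists_positive_lower_bound _ L Hw) as [m [Hm Hlow]].
    exists w1, w2, m. split; auto. intros q Hq Hqv.
    apply (Hlow q). apply in_other_support; auto.
  - exfalso. apply Hnv. destruct Hh as [l [H1 H2]]. exists l. split; auto.
    eapply Forall_impl; [|exact H1]. intros [c p] [Hc Hp]. split; auto.
    apply in_other_support in Hp; auto.
Qed.

Lemma diff_bounded N x y : (x <= N)%nat -> (y <= N)%nat -> - INR N <= INR x - INR y <= INR N.
Proof.
  intros Hx Hy. apply le_INR in Hx. apply le_INR in Hy.
  assert (0 <= INR x) by apply pos_INR. assert (0 <= INR y) by apply pos_INR. lra.
Qed.

(* The separating functional can be taken of the form (lmb, sg) with sg = +-1: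
   perturb a vanishing second coordinate, then rescale. *)
Lemma vertex_functional_normalized a N v : bounded_coefs a N -> newton_vertex a v ->
  exists lmb sg mu, (sg = 1 \/ sg = -1)%Z /\ 0 < mu /\ forall q, support a q -> q <> v ->
    mu < lmb * (INR (fst v) - INR (fst q)) + IZR sg * (INR (snd v) - INR (snd q)).
Proof.
  intros Hb Hv.
  destruct (vertex_separating_functional a N v Hb Hv) as [w1 [w2 [m [Hm Hw]]]].
  destruct (support_bounded a N v Hb (proj1 Hv)) as [_ Hv2].
  assert (HN : 0 <= INR N) by apply pos_INR.
  set (delta := m / (2 * (INR N + 1))).
  assert (Hdelta : 0 < delta /\ delta * INR N <= m / 2).
  { unfold delta. split; [apply Rdiv_lt_0_compat; lra|].
    apply (Rmult_le_reg_r (2 * (INR N + 1))); [lra|].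
    replace (m / (2 * (INR N + 1)) * INR N * (2 * (INR N + 1))) with (m * INR N) by (field; lra).
    nra. }
  set (w2' := if Req_EM_T w2 0 then delta else w2).
  assert (Hw2' : w2' <> 0) by (unfold w2'; destruct (Req_EM_T w2 0); lra).
  assert (Hw' : forall q, support a q -> q <> v ->
            m / 2 < w1 * (INR (fst v) - INR (fst q)) + w2' * (INR (snd v) - INR (snd q))).
  { intros q Hq Hqv. specialize (Hw q Hq Hqv). unfold w2'.
    destruct (Req_EM_T w2 0) as [E|E]; [|lra]. rewrite E in Hw.
    destruct (support_bounded a N q Hb Hq) as [_ Hq2].
    assert (Hd := diff_bounded N _ _ Hv2 Hq2). nra. }
  set (beta := Rabs w2').
  assert (Hbeta : 0 < beta) by (apply Rabs_pos_lt; auto).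
  set (sg := if Rlt_dec 0 w2' then 1%Z else (-1)%Z).
  assert (Hsg : w2' = IZR sg * beta).
  { unfold sg, beta. destruct (Rlt_dec 0 w2').
    - rewrite Rabs_right by lra. simpl. ring.
    - rewrite Rabs_left by lra. simpl. ring. }
  exists (w1 / beta), sg, (m / 2 / beta).
  split; [unfold sg; destruct (Rlt_dec 0 w2'); auto|].
  split; [apply Rdiv_lt_0_compat; lra|].
  intros q Hq Hqv. specialize (Hw' q Hq Hqv). rewrite Hsg in Hw'.
  apply (Rmult_lt_reg_r beta); auto.
  replace (m / 2 / beta * beta) with (m / 2) by (field; lra).
  replace ((w1 / beta * (INR (fst v) - INR (fst q)) + IZR sg * (INR (snd v) - INR (snd q))) * beta)
    with (w1 * (INR (fst v) - INR (fst q)) + IZR sg * beta * (INR (snd v) - INR (snd q)))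
    by (field; lra).
  exact Hw'.
Qed.

Definition maximizes_uniquely (a : nat -> nat -> Cx) (e w : Z) (v : nat * nat) : Prop :=
  forall q, support a q -> q <> v ->
  (e * Z.of_nat (fst q) + w * Z.of_nat (snd q) < e * Z.of_nat (fst v) + w * Z.of_nat (snd v))%Z.

(* Integral version: for every large W, v uniquely maximizes e i + sg W j for
   e = floor (W lmb); the rounding error is absorbed by the margin W mu. *)
Lemma vertex_integral_functional a N v : bounded_coefs a N -> newton_vertex a v ->
  exists sg, (sg = 1 \/ sg = -1)%Z /\ exists W0 : nat, forall W : nat, (W0 <= W)%nat ->
    exists e, maximizes_uniquely a e (sg * Z.of_nat W) v.
Proof.
  intros Hb Hv.
  destruct (vertex_functional_normalized a N v Hb Hv) as [lmb [sg [mu [Hsg [Hmu Hphi]]]]].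
  destruct (support_bounded a N v Hb (proj1 Hv)) as [Hv1 _].
  exists sg. split; auto.
  destruct (INR_archimed mu (INR N) Hmu) as [W0 HW0].
  exists W0. intros W HW. exists (Int_part (INR W * lmb)).
  destruct (base_Int_part (INR W * lmb)) as [Hi1 Hi2].
  set (e := Int_part (INR W * lmb)) in *.
  set (dl := INR W * lmb - IZR e).
  intros q Hq Hqv. specialize (Hphi q Hq Hqv).
  destruct (support_bounded a N q Hb Hq) as [Hq1 _].
  assert (Hd := diff_bounded N _ _ Hv1 Hq1).
  assert (Hdl : 0 <= dl < 1) by (unfold dl; lra).
  assert (HWle : INR W0 <= INR W) by (apply le_INR; auto).
  apply Z.lt_0_sub, lt_IZR.
  rewrite minus_IZR, !plus_IZR, !mult_IZR, <- !INR_IZR_INZ.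
  replace (IZR e * INR (fst v) + IZR sg * INR W * INR (snd v) -
           (IZR e * INR (fst q) + IZR sg * INR W * INR (snd q)))
    with (INR W * (lmb * (INR (fst v) - INR (fst q)) + IZR sg * (INR (snd v) - INR (snd q)))
          - dl * (INR (fst v) - INR (fst q))) by (unfold dl; ring).
  assert (INR W0 * mu <= INR W * mu) by (apply Rmult_le_compat_r; lra).
  assert (mu * INR W <= (lmb * (INR (fst v) - INR (fst q)) + IZR sg * (INR (snd v) - INR (snd q))) * INR W)
    by (apply Rmult_le_compat_r; [apply pos_INR|lra]).
  nra.
Qed.

Lemma between_on_row_not_vertex a i1 i2 i3 J :
  support a (i1, J) -> support a (i3, J) -> (i1 < i2 < i3)%nat ->
  ~ newton_vertex a (i2, J).
Proof.
  intros H1 H3 Hi [_ Hnv]. apply Hnv.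
  assert (L1 : INR i1 < INR i2) by (apply lt_INR; lia).
  assert (L2 : INR i2 < INR i3) by (apply lt_INR; lia).
  set (d := INR i3 - INR i1).
  exists [((INR i3 - INR i2) / d, (i1, J)); ((INR i2 - INR i1) / d, (i3, J))].
  split; [|split; [|split]]; simpl; try (unfold d; field; lra).
  repeat apply Forall_cons; try apply Forall_nil; simpl;
    (split; [unfold d, Rdiv; apply Rmult_le_pos; [lra|left; apply Rinv_0_lt_compat; lra]|]);
    (split; [auto|intro E; inversion E; lia]).
Qed.

Lemma at_most_two_vertices_on_row a J l : NoDup l -> (forall p, In p l -> newton_vertex a p) ->
  (length (filter (fun p => Nat.eqb (snd p) J) l) <= 2)%nat.
Proof.
  intros Hnd Hv.
  assert (Hnd' := NoDup_filter (fun p => Nat.eqb (snd p) J) Hnd).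
  assert (Hin : forall p, In p (filter (fun p => Nat.eqb (snd p) J) l) ->
                  support a p /\ newton_vertex a p /\ snd p = J).
  { intros p Hp. apply filter_In in Hp as [H1 H2]. apply Nat.eqb_eq in H2.
    specialize (Hv p H1). split; [apply Hv|auto]. }
  destruct (filter (fun p => Nat.eqb (snd p) J) l) as [|[i1 j1] [|[i2 j2] [|[i3 j3] t]]];
    simpl; try lia.
  exfalso.
  inversion Hnd' as [|? ? N1 Hnd2]; subst. inversion Hnd2 as [|? ? N2 _]; subst.
  destruct (Hin (i1, j1)) as [S1 [V1 J1]]; [simpl; auto|].
  destruct (Hin (i2, j2)) as [S2 [V2 J2]]; [simpl; auto|].
  destruct (Hin (i3, j3)) as [S3 [V3 J3]]; [simpl; auto|].
  simpl in J1, J2, J3. subst j1 j2 j3.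
  assert (i1 <> i2) by (intro; subst; apply N1; simpl; auto).
  assert (i1 <> i3) by (intro; subst; apply N1; simpl; auto).
  assert (i2 <> i3) by (intro; subst; apply N2; simpl; auto).
  destruct (Nat.lt_total i1 i2) as [A|[A|A]]; [|lia|];
  destruct (Nat.lt_total i2 i3) as [B|[B|B]]; try lia;
  destruct (Nat.lt_total i1 i3) as [C|[C|C]]; try lia;
  solve [ eapply (between_on_row_not_vertex a i1 i2 i3); eauto
        | eapply (between_on_row_not_vertex a i1 i3 i2); eauto
        | eapply (between_on_row_not_vertex a i2 i1 i3); eauto
        | eapply (between_on_row_not_vertex a i2 i3 i1); eauto
        | eapply (between_on_row_not_vertex a i3 i1 i2); eauto
        | eapply (between_on_row_not_vertex a i3 i2 i1); eauto ].
Qed.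

Lemma maximizer_unique a e w v v' : maximizes_uniquely a e w v -> maximizes_uniquely a e w v' ->
  support a v -> support a v' -> v = v'.
Proof.
  intros H1 H2 S1 S2. destruct (pair_eq_dec v v') as [E|E]; auto.
  specialize (H1 v' S2 (fun h => E (eq_sym h))). specialize (H2 v S1 E). lia.
Qed.

Lemma same_row_exponents_straddle_zero a e e' w v v' :
  maximizes_uniquely a e w v -> maximizes_uniquely a e' w v' ->
  support a v -> support a v' -> v <> v' -> snd v = snd v' -> (e < e')%Z -> (e < 0 < e')%Z.
Proof.
  intros H1 H2 S1 S2 Hne Hrow Hlt.
  specialize (H1 v' S2 (fun h => Hne (eq_sym h))). specialize (H2 v S1 Hne).
  rewrite Hrow in H1, H2. destruct v as [i j], v' as [i' j']; simpl in *. nia.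
Qed.

Lemma classify_by_sign a N l : bounded_coefs a N -> NoDup l ->
  (forall p, In p l -> newton_vertex a p) ->
  exists U1 U2 W0, NoDup U1 /\ NoDup U2 /\ incl U1 l /\ incl U2 l /\
    (length U1 + length U2 = length l)%nat /\
    (forall v, In v U1 -> forall W, (W0 <= W)%nat ->
       exists e, maximizes_uniquely a e (1 * Z.of_nat W) v) /\
    (forall v, In v U2 -> forall W, (W0 <= W)%nat ->
       exists e, maximizes_uniquely a e (-1 * Z.of_nat W) v).
Proof.
  intros Hb. induction l as [|v l IH]; intros Hnd Hv.
  - exists [], [], 0%nat. repeat split; try constructor; try (intros x []); simpl; auto.
  - inversion Hnd as [|? ? Hvl Hnd']; subst.
    destruct IH as [U1 [U2 [W0 [N1 [N2 [I1 [I2 [Hlen [E1 E2]]]]]]]]]; auto.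
    { intros p Hp; apply Hv; simpl; auto. }
    destruct (vertex_integral_functional a N v Hb (Hv v (or_introl eq_refl)))
      as [sg [[-> | ->] [W1 HW1]]].
    + exists (v :: U1), U2, (Nat.max W0 W1). repeat split.
      * constructor; auto.
      * auto.
      * intros x [<-|Hx]; simpl; auto.
      * intros x Hx; simpl; auto.
      * simpl. lia.
      * intros x [<-|Hx] W HW; [apply HW1; lia|apply E1; auto; lia].
      * intros x Hx W HW; apply E2; auto; lia.
    + exists U1, (v :: U2), (Nat.max W0 W1). repeat split.
      * auto.
      * constructor; auto.
      * intros x Hx; simpl; auto.
      * intros x [<-|Hx]; simpl; auto.
      * simpl. lia.
      * intros x Hx W HW; apply E1; auto; lia.
      * intros x [<-|Hx] W HW; [apply HW1; lia|apply E2; auto; lia].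
Qed.

Lemma large_sign_class a N l : bounded_coefs a N -> NoDup l ->
  (forall p, In p l -> newton_vertex a p) ->
  exists (w : Z) (U : list (nat * nat)), NoDup U /\ incl U l /\
    (length l <= 2 * length U)%nat /\
    forall v, In v U -> exists e, maximizes_uniquely a e w v.
Proof.
  intros Hb Hnd Hv.
  destruct (classify_by_sign a N l Hb Hnd Hv) as [U1 [U2 [W0 [N1 [N2 [I1 [I2 [HL [E1 E2]]]]]]]]].
  destruct (le_lt_dec (length U2) (length U1)).
  - exists (1 * Z.of_nat W0)%Z, U1. split; [auto|split; [auto|split; [lia|]]]. intros v Hv'. apply E1; auto.
  - exists (-1 * Z.of_nat W0)%Z, U2. split; [auto|split; [auto|split; [lia|]]]. intros v Hv'. apply E2; auto.
Qed.

Lemma finite_choice {X Y} (P : X -> Y -> Prop) (U : list X) :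
  (forall v, In v U -> exists e, P v e) ->
  exists L : list (X * Y), map fst L = U /\ Forall (fun ve => P (fst ve) (snd ve)) L.
Proof.
  induction U as [|v U IH]; intros H.
  - exists []. split; auto.
  - destruct IH as [L [H1 H2]]. { intros; apply H; simpl; auto. }
    destruct (H v (or_introl eq_refl)) as [e He].
    exists ((v, e) :: L). split; simpl; [congruence|constructor; auto].
Qed.

Lemma NoDup_map_snd {X Y} (L : list (X * Y)) :
  NoDup (map fst L) -> (forall x y, In x L -> In y L -> snd x = snd y -> fst x = fst y) ->
  NoDup (map snd L).
Proof.
  induction L as [|[v e] L IH]; intros H1 H2; simpl; constructor.
  - intros Hin. apply in_map_iff in Hin as [[v' e'] [E Hin]]. simpl in E. subst e'.
    inversion H1 as [|? ? Hn _]; subst. apply Hn.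
    assert (v' = v) by (apply (H2 (v', e) (v, e)); simpl; auto).
    subst. apply in_map_iff. exists (v, e); auto.
  - apply IH; [inversion H1; auto|]. intros; apply H2; simpl; auto.
Qed.

Lemma map_fst_functional {X Y} (L : list (X * Y)) v e e' :
  NoDup (map fst L) -> In (v, e) L -> In (v, e') L -> e = e'.
Proof.
  induction L as [|[v0 e0] L IH]; intros H1 H2 H3; [destruct H2|].
  inversion H1 as [|? ? Hn Hnd]; subst. simpl in *.
  destruct H2 as [E2|H2]; destruct H3 as [E3|H3].
  - congruence.
  - inversion E2; subst. exfalso; apply Hn. apply in_map_iff. exists (v, e'); auto.
  - inversion E3; subst. exfalso; apply Hn. apply in_map_iff. exists (v, e); auto.
  - eauto.
Qed.

Definition zrange (B : nat) : list Z :=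
  map (fun n => (Z.of_nat n - Z.of_nat B)%Z) (seq 0 (S (2 * B))).

Lemma shifted_seq_sorted (c : Z) len start :
  StronglySorted Z.lt (map (fun n => (Z.of_nat n - c)%Z) (seq start len)).
Proof.
  revert start. induction len as [|len IH]; intros start; simpl; constructor; auto.
  apply Forall_forall. intros x Hx. apply in_map_iff in Hx as [n [<- Hn]].
  apply in_seq in Hn. lia.
Qed.

Lemma in_zrange B e : (Z.abs e <= Z.of_nat B)%Z -> In e (zrange B).
Proof.
  intros H. unfold zrange. apply in_map_iff. exists (Z.to_nat (e + Z.of_nat B)).
  split; [lia|]. apply in_seq. lia.
Qed.

Lemma StronglySorted_filter (f : Z -> bool) l :
  StronglySorted Z.lt l -> StronglySorted Z.lt (filter f l).
Proof.
  induction l as [|x l IH]; intros H; simpl; auto.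
  inversion H as [|? ? H1 H2]; subst. destruct (f x); auto.
  constructor; auto. apply Forall_forall. intros y Hy. apply filter_In in Hy as [Hy _].
  eapply Forall_forall in H2; eauto.
Qed.

Lemma StronglySorted_NoDup l : StronglySorted Z.lt l -> NoDup l.
Proof.
  induction l as [|x l IH]; intros H; constructor.
  - inversion H as [|? ? H1 H2]; subst. intro Hx. eapply Forall_forall in H2; eauto. lia.
  - inversion H; auto.
Qed.

Lemma integers_bounded (l : list Z) : exists B : nat, forall e, In e l -> (Z.abs e <= Z.of_nat B)%Z.
Proof.
  induction l as [|x l [B IH]].
  - exists 0%nat. intros e [].
  - exists (Nat.max B (Z.to_nat (Z.abs x))). intros e [<-|He]; [lia|]. specialize (IH e He). lia.
Qed.

Lemma sorted_enumeration (Es : list Z) : NoDup Es ->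
  exists S, StronglySorted Z.lt S /\ (forall e, In e S <-> In e Es) /\ length S = length Es.
Proof.
  intros HEs. destruct (integers_bounded Es) as [B HB].
  set (S := filter (fun e => existsb (Z.eqb e) Es) (zrange B)).
  assert (HSs : StronglySorted Z.lt S) by apply StronglySorted_filter, shifted_seq_sorted.
  assert (HSin : forall e, In e S <-> In e Es).
  { intros e. unfold S. rewrite filter_In. split.
    - intros [_ H]. apply existsb_exists in H as [x [Hx Ex]]. apply Z.eqb_eq in Ex. subst; auto.
    - intros H. split; [apply in_zrange; auto|]. apply existsb_exists. exists e.
      split; auto. apply Z.eqb_refl. }
  exists S. split; [auto|split; [auto|]].
  assert (HSnd : NoDup S) by (apply StronglySorted_NoDup; auto).
  assert (length S <= length Es)%nat by (apply NoDup_incl_length; auto; intros x; apply HSin).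
  assert (length Es <= length S)%nat by (apply NoDup_incl_length; auto; intros x; apply HSin).
  lia.
Qed.

Lemma exponent_chain a (w : Z) (U : list (nat * nat)) :
  NoDup U -> (forall v, In v U -> support a v) ->
  (forall v, In v U -> exists e, maximizes_uniquely a e w v) ->
  exists (S : list Z) (V : Z -> nat * nat),
    StronglySorted Z.lt S /\ length S = length U /\
    (forall e, In e S -> In (V e) U /\ maximizes_uniquely a e w (V e)) /\
    (forall e e', In e S -> In e' S -> e <> e' -> V e <> V e').
Proof.
  intros Hnd Hs Hex.
  destruct (finite_choice (fun v e => maximizes_uniquely a e w v) U Hex) as [L [HL1 HL2]].
  rewrite Forall_forall in HL2.
  assert (HinU : forall ve, In ve L -> In (fst ve) U).
  { intros ve H. rewrite <- HL1. apply in_map; auto. }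
  set (Es := map snd L).
  assert (HEs : NoDup Es).
  { apply NoDup_map_snd; [rewrite HL1; auto|].
    intros x y Hx Hy Exy. apply (maximizer_unique a (snd x) w).
    - apply (HL2 x Hx).
    - rewrite Exy. apply (HL2 y Hy).
    - apply Hs, HinU; auto.
    - apply Hs, HinU; auto. }
  destruct (sorted_enumeration Es HEs) as [S [HSs [HSin HSlen]]].
  set (V := fun e => match find (fun ve => Z.eqb (snd ve) e) L with
                     | Some ve => fst ve | None => (0%nat, 0%nat) end).
  assert (HV : forall e, In e Es -> In (V e, e) L).
  { intros e He. unfold V. destruct (find (fun ve => Z.eqb (snd ve) e) L) as [ve|] eqn:Ef.
    - apply find_some in Ef as [H1 H2]. apply Z.eqb_eq in H2. subst e. destruct ve; auto.
    - exfalso. apply in_map_iff in He as [ve [E Hve]].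
      eapply find_none in Ef; eauto. rewrite E, Z.eqb_refl in Ef. discriminate. }
  exists S, V. split; [|split; [|split]]; auto.
  - rewrite HSlen. unfold Es. rewrite <- HL1, !length_map. reflexivity.
  - intros e He. apply HSin, HV in He. split; [apply (HinU _ He)|apply (HL2 _ He)].
  - intros e e' He He' Hne E. apply HSin, HV in He. apply HSin, HV in He'.
    rewrite E in He. apply Hne. apply (map_fst_functional L (V e')); auto. rewrite HL1; auto.
Qed.

Fixpoint adjacent_sum {X} (g : X -> X -> R) (l : list X) : R :=
  match l with
  | x :: ((y :: _) as t) => g x y + adjacent_sum g t
  | _ => 0
  end.

Lemma adjacent_sum_le {X} (g1 g2 : X -> X -> R) l :
  (forall e e', In e l -> In e' l -> g1 e e' <= g2 e e') -> adjacent_sum g1 l <= adjacent_sum g2 l.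
Proof.
  induction l as [|x [|y t] IH]; intros H; simpl; try lra.
  simpl in IH. apply Rplus_le_compat.
  - apply H; simpl; auto.
  - apply IH. intros e e' He He'. apply H; simpl in *; tauto.
Qed.

Definition indicator (b : bool) : R := if b then 1 else 0.

Definition opposite_signs (u v : R) : bool := if Rlt_dec (u * v) 0 then true else false.

(* In an increasing chain of positive integers, no adjacent pair straddles 0,
   so every adjacent pair is good. *)
Lemma good_adjacent_pairs_positive (good : Z -> Z -> bool) l : StronglySorted Z.lt l ->
  (forall e e', In e l -> In e' l -> (e < e')%Z -> good e e' = false -> (e < 0 < e')%Z) ->
  Forall (fun e => (0 < e)%Z) l ->
  adjacent_sum (fun e e' => indicator (good e e')) l >= INR (length l) - 1.
Proof.
  induction l as [|x [|y t] IH]; intros Hs Hg Hp; [simpl; lra|simpl; lra|].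
  change (length (x :: y :: t)) with (S (length (y :: t))). rewrite S_INR.
  change (adjacent_sum ?g (x :: y :: t)) with (g x y + adjacent_sum g (y :: t)).
  inversion Hs as [|? ? Hs' Hf]; subst. inversion Hp as [|? ? Hx Hp']; subst.
  assert (Hxy : (x < y)%Z) by (inversion Hf; auto).
  unfold indicator at 1. destruct (good x y) eqn:G.
  - specialize (IH Hs' (fun e e' He He' => Hg e e' (or_intror He) (or_intror He')) Hp'). lra.
  - exfalso. specialize (Hg x y (or_introl eq_refl) (or_intror (or_introl eq_refl)) Hxy G). lia.
Qed.

Lemma good_adjacent_pairs (good : Z -> Z -> bool) l : StronglySorted Z.lt l ->
  (forall e e', In e l -> In e' l -> (e < e')%Z -> good e e' = false -> (e < 0 < e')%Z) ->
  adjacent_sum (fun e e' => indicator (good e e')) l >= INR (length l) - 2.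
Proof.
  induction l as [|x [|y t] IH]; intros Hs Hg; [simpl; lra|simpl; lra|].
  change (length (x :: y :: t)) with (S (length (y :: t))). rewrite S_INR.
  change (adjacent_sum ?g (x :: y :: t)) with (g x y + adjacent_sum g (y :: t)).
  inversion Hs as [|? ? Hs' Hf]; subst.
  assert (Hxy : (x < y)%Z) by (inversion Hf; auto).
  assert (Hg' := fun e e' He He' => Hg e e' (or_intror He) (or_intror He')).
  unfold indicator at 1. destruct (good x y) eqn:G.
  - specialize (IH Hs' Hg'). lra.
  - assert (H := Hg x y (or_introl eq_refl) (or_intror (or_introl eq_refl)) Hxy G).
    assert (P : Forall (fun e => (0 < e)%Z) (y :: t)).
    { constructor; [lia|]. inversion Hs' as [|? ? _ Hf']; subst.
      eapply Forall_impl; [|exact Hf']. intros z Hz; simpl in Hz; lia. }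
    assert (C := good_adjacent_pairs_positive good (y :: t) Hs' Hg' P). lra.
Qed.

Lemma roots_from_sign_changes (F : R -> R) (X : Z -> R) : continuity F ->
  (forall e e', (e < e')%Z -> X e < X e') ->
  forall l e, StronglySorted Z.lt (e :: l) -> exists roots : list R,
    NoDup roots /\ Forall (fun r => F r = 0) roots /\
    adjacent_sum (fun e e' => indicator (opposite_signs (F (X e)) (F (X e')))) (e :: l)
      <= INR (length roots) /\
    (forall r, In r roots -> X e < r).
Proof.
  intros HF HX. induction l as [|e' t IH]; intros e Hs.
  { exists []. repeat split; [constructor|constructor|simpl; lra|intros r []]. }
  inversion Hs as [|? ? Hs' Hf]; subst.
  assert (Hee : (e < e')%Z) by (inversion Hf; auto).
  destruct (IH e' Hs') as [roots [N1 [N2 [N3 N4]]]].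
  simpl adjacent_sum. simpl adjacent_sum in N3.
  assert (HXe := HX e e' Hee).
  unfold indicator at 1, opposite_signs at 1.
  destruct (Rlt_dec (F (X e) * F (X e')) 0) as [Hneg|Hnn].
  - destruct (IVT_cor F (X e) (X e') HF (Rlt_le _ _ HXe) (Rlt_le _ _ Hneg)) as [z [Hz1 Hz2]].
    assert (z <> X e) by (intro E; subst; rewrite Hz2 in Hneg; lra).
    assert (z <> X e') by (intro E; subst; rewrite Hz2 in Hneg; lra).
    exists (z :: roots). split; [|split; [|split]].
    + constructor; auto. intro Hin. specialize (N4 z Hin). lra.
    + constructor; auto.
    + simpl length. rewrite S_INR. lra.
    + intros r [<-|Hr]; [lra|]. specialize (N4 r Hr). lra.
  - exists roots. repeat split; auto; [lra|].
    intros r Hr. specialize (N4 r Hr). lra.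
Qed.

Definition polar_angle (A B : R) : R :=
  let x := A / sqrt (A * A + B * B) in if Rle_dec 0 B then acos x else - acos x.

Lemma polar_form A B : ~ (A = 0 /\ B = 0) ->
  0 < sqrt (A * A + B * B) /\
  A = sqrt (A * A + B * B) * cos (polar_angle A B) /\
  B = sqrt (A * A + B * B) * sin (polar_angle A B).
Proof.
  intros H. unfold polar_angle. set (r := sqrt (A * A + B * B)).
  assert (Hr2 : r * r = A * A + B * B) by (unfold r; apply sqrt_sqrt; nra).
  assert (Hr : 0 < r).
  { unfold r. apply sqrt_lt_R0.
    destruct (Req_dec A 0); destruct (Req_dec B 0); try tauto; nra. }
  set (x := A / r).
  assert (Hx : -1 <= x <= 1).
  { unfold x. assert (A * A <= r * r) by nra.
    split; apply (Rmult_le_reg_r r); auto; unfold Rdiv; rewrite Rmult_assoc, Rinv_l; nra. }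
  assert (Hs : sqrt (1 - x²) = Rabs B / r).
  { assert (E : 1 - x² = (Rabs B / r)²).
    { unfold Rsqr, x.
      replace (Rabs B / r * (Rabs B / r)) with (Rabs B * Rabs B / (r * r)) by (field; lra).
      rewrite <- Rabs_mult, Rabs_right by nra.
      replace (1 - A / r * (A / r)) with ((r * r - A * A) / (r * r)) by (field; lra).
      rewrite Hr2. field. nra. }
    rewrite E. apply sqrt_Rsqr.
    apply Rmult_le_pos; [apply Rabs_pos|left; apply Rinv_0_lt_compat; lra]. }
  split; auto.
  destruct (Rle_dec 0 B) as [HB|HB].
  - rewrite cos_acos, sin_acos by auto. rewrite Hs, Rabs_right by lra.
    unfold x. split; field; lra.
  - rewrite cos_neg, sin_neg, cos_acos, sin_acos by auto. rewrite Hs, Rabs_left by lra.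
    unfold x. split; field; lra.
Qed.

Lemma harmonic_polar A B (j : nat) t : ~ (A = 0 /\ B = 0) ->
  A * cos (INR j * t) - B * sin (INR j * t) =
  sqrt (A * A + B * B) * cos (INR j * t + polar_angle A B).
Proof.
  intros H. destruct (polar_form A B H) as [_ [E1 E2]].
  set (r := sqrt (A * A + B * B)) in *. set (phi := polar_angle A B) in *.
  rewrite cos_plus. rewrite E1 at 1. rewrite E2 at 1. ring.
Qed.

Lemma cos_mul x y : cos x * cos y = (cos (x + y) + cos (x - y)) / 2.
Proof. rewrite cos_plus, cos_minus. field. Qed.

Lemma cos_sqr x : cos x * cos x = (1 + cos (2 * x)) / 2.
Proof.
  replace (2 * x) with (x + x) by ring. rewrite cos_plus.
  assert (H := sin2_cos2 x). unfold Rsqr in H. lra.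
Qed.

(* Linearization of (Q^2 - Q)/2 for Q = cos X cos Y into a constant plus
   pure cosines; the constant 1/8 is the mean value. *)
Lemma product_statistic_expansion X Y :
  let Q := cos X * cos Y in
  (Q * Q - Q) / 2 =
  1/8 + 1/8 * cos (2 * X) + 1/8 * cos (2 * Y) + 1/16 * cos (2 * X + 2 * Y)
  + 1/16 * cos (2 * X - 2 * Y) + -1/4 * cos (X + Y) + -1/4 * cos (X - Y).
Proof.
  cbv zeta.
  replace (cos X * cos Y * (cos X * cos Y)) with ((cos X * cos X) * (cos Y * cos Y)) by ring.
  rewrite !cos_sqr.
  replace ((1 + cos (2 * X)) / 2 * ((1 + cos (2 * Y)) / 2))
    with ((1 + cos (2 * X) + cos (2 * Y) + cos (2 * X) * cos (2 * Y)) / 4) by field.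
  rewrite (cos_mul (2 * X) (2 * Y)), (cos_mul X Y). field.
Qed.

Lemma cos_frequency_difference (j j' : nat) (phi phi' : R) : j <> j' ->
  exists n psi, (1 <= n)%nat /\ forall t,
    cos ((INR j * t + phi) - (INR j' * t + phi')) = cos (INR n * t + psi).
Proof.
  intros Hj. destruct (Nat.lt_ge_cases j' j) as [H|H].
  - exists (j - j')%nat, (phi - phi'). split; [lia|]. intros t.
    rewrite minus_INR by lia. f_equal. ring.
  - exists (j' - j)%nat, (phi' - phi). split; [lia|]. intros t.
    rewrite minus_INR by lia. rewrite <- cos_neg. f_equal. ring.
Qed.

Module CosineAverages.
Import Coquelicot.Coquelicot.

Lemma is_RInt_const_period (c v : R) : v = 2 * PI * c -> is_RInt (fun _ => c) 0 (2 * PI) v.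
Proof.
  intros ->. assert (H := is_RInt_const 0 (2 * PI) c).
  match type of H with context [is_RInt _ _ _ ?v] => replace v with (2 * PI * c) in H end; auto.
  unfold scal; simpl; unfold mult; simpl.
  match goal with |- ?a = ?b => change (@eq R a b) end. ring.
Qed.

Lemma is_RInt_zero : is_RInt (fun _ => 0) 0 (2 * PI) 0.
Proof. apply is_RInt_const_period. ring. Qed.

Lemma integral_cos (n : nat) (psi : R) : (1 <= n)%nat ->
  is_RInt (fun t => cos (INR n * t + psi)) 0 (2 * PI) 0.
Proof.
  intros Hn.
  assert (Hn' : INR n <> 0) by (apply not_0_INR; lia).
  assert (H := is_RInt_derive (fun t => sin (INR n * t + psi) / INR n)
                  (fun t => cos (INR n * t + psi)) 0 (2 * PI)). cbv beta in H.
  match type of H with context [is_RInt _ _ _ ?v] =>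
    replace v with 0 in H end.
  - apply H.
    + intros x _. auto_derive; auto. field; auto.
    + intros x _. apply (ex_derive_continuous (K:=R_AbsRing) (V:=R_NormedModule)).
      auto_derive; auto.
  - unfold minus, plus, opp; simpl.
    replace (INR n * (2 * PI) + psi) with (psi + 2 * INR n * PI) by ring.
    rewrite sin_period. replace (INR n * 0 + psi) with psi by ring. field; auto.
Qed.

Lemma is_RInt_add_null (f g : R -> R) (If k : R) :
  is_RInt f 0 (2 * PI) If -> is_RInt g 0 (2 * PI) 0 ->
  is_RInt (fun t => f t + k * g t) 0 (2 * PI) If.
Proof.
  intros Hf Hg.
  assert (H := is_RInt_plus f (fun t => scal k (g t)) 0 (2 * PI) If (scal k 0) Hf
                 (is_RInt_scal _ _ _ _ _ Hg)).
  match type of H with context [is_RInt _ _ _ ?v] => replace v with If in H end.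
  - eapply is_RInt_ext; [|exact H]. intros x _. reflexivity.
  - unfold plus, scal; simpl. unfold mult; simpl.
    match goal with |- ?a = ?b => change (@eq R a b) end. ring.
Qed.

Lemma integral_product_statistic (j j' : nat) (phi phi' : R) :
  (1 <= j)%nat -> (1 <= j')%nat -> j <> j' ->
  is_RInt (fun t => let Q := cos (INR j * t + phi) * cos (INR j' * t + phi') in (Q * Q - Q) / 2)
    0 (2 * PI) (PI / 4).
Proof.
  intros H1 H2 H3.
  destruct (cos_frequency_difference j j' phi phi' H3) as [n1 [psi1 [Hn1 E1]]].
  destruct (cos_frequency_difference (2 * j) (2 * j') (2 * phi) (2 * phi'))
    as [n2 [psi2 [Hn2 E2]]]; [lia|].
  assert (I0 : is_RInt (fun _ => 1/8) 0 (2 * PI) (PI / 4))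
    by (apply is_RInt_const_period; field).
  assert (Hc : forall n psi, (1 <= n)%nat ->
                 is_RInt (fun t => cos (INR n * t + psi)) 0 (2 * PI) 0) by apply integral_cos.
  assert (G1 := is_RInt_add_null _ _ _ (1/8) I0 (Hc (2 * j)%nat (2 * phi) ltac:(lia))).
  assert (G2 := is_RInt_add_null _ _ _ (1/8) G1 (Hc (2 * j')%nat (2 * phi') ltac:(lia))).
  assert (G3 := is_RInt_add_null _ _ _ (1/16) G2
                  (Hc (2 * j + 2 * j')%nat (2 * phi + 2 * phi') ltac:(lia))).
  assert (G4 := is_RInt_add_null _ _ _ (1/16) G3 (Hc n2 psi2 Hn2)).
  assert (G5 := is_RInt_add_null _ _ _ (-1/4) G4 (Hc (j + j')%nat (phi + phi') ltac:(lia))).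
  assert (G := is_RInt_add_null _ _ _ (-1/4) G5 (Hc n1 psi1 Hn1)).
  eapply is_RInt_ext; [|exact G]. intros t _.
  rewrite product_statistic_expansion, <- E1, <- E2, !plus_INR, !mult_INR. simpl INR.
  set (X := INR j * t + phi). set (Y := INR j' * t + phi').
  replace ((1 + 1) * INR j * t + 2 * phi) with (2 * X) by (unfold X; ring).
  replace ((1 + 1) * INR j' * t + 2 * phi') with (2 * Y) by (unfold Y; ring).
  replace (((1 + 1) * INR j + (1 + 1) * INR j') * t + (2 * phi + 2 * phi')) with (2 * X + 2 * Y)
    by (unfold X, Y; ring).
  replace ((INR j + INR j') * t + (phi + phi')) with (X + Y) by (unfold X, Y; ring).
  reflexivity.
Qed.

Lemma is_RInt_adjacent_sum {X} (g : X -> X -> R -> R) (I : X -> X -> R) l :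
  (forall e e', In e l -> In e' l -> is_RInt (g e e') 0 (2 * PI) (I e e')) ->
  is_RInt (fun t => adjacent_sum (fun e e' => g e e' t) l) 0 (2 * PI) (adjacent_sum I l).
Proof.
  induction l as [|x [|y t] IH]; intros H; [apply is_RInt_zero|apply is_RInt_zero|].
  assert (H1 := H x y (or_introl eq_refl) (or_intror (or_introl eq_refl))).
  assert (H2 : is_RInt (fun z => adjacent_sum (fun e e' => g e e' z) (y :: t)) 0 (2 * PI)
                 (adjacent_sum I (y :: t))).
  { apply IH. intros e e' He He'. apply H; simpl in *; tauto. }
  exact (is_RInt_plus _ _ _ _ _ _ H1 H2).
Qed.

Section Averaging.
Variables (I : Type) (J : I -> nat) (phi : I -> R).

Definition wave (e : I) (t : R) : R := cos (INR (J e) * t + phi e).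

Definition distinct_frequencies (e e' : I) : bool := negb (Nat.eqb (J e) (J e')).

(* statistic whose mean is 1/8 on pairs of distinct frequencies and which is
   at most the indicator of a sign change *)
Definition pair_statistic (e e' : I) (t : R) : R :=
  if distinct_frequencies e e' then (wave e t * wave e' t * (wave e t * wave e' t)
                                     - wave e t * wave e' t) / 2 else 0.

Lemma integral_pair_statistic e e' : (1 <= J e)%nat -> (1 <= J e')%nat ->
  is_RInt (pair_statistic e e') 0 (2 * PI) (if distinct_frequencies e e' then PI / 4 else 0).
Proof.
  intros J1 J2. unfold pair_statistic.
  destruct (distinct_frequencies e e') eqn:G; [|apply is_RInt_zero].
  unfold distinct_frequencies in G. apply Bool.negb_true_iff, Nat.eqb_neq in G.
  exact (integral_product_statistic (J e) (J e') (phi e) (phi e') J1 J2 G).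
Qed.

Lemma pair_statistic_le e e' t :
  pair_statistic e e' t <= indicator (opposite_signs (wave e t) (wave e' t)).
Proof.
  unfold pair_statistic, indicator, opposite_signs, wave.
  assert (C1 := COS_bound (INR (J e) * t + phi e)).
  assert (C2 := COS_bound (INR (J e') * t + phi e')).
  set (c1 := cos (INR (J e) * t + phi e)) in *. set (c2 := cos (INR (J e') * t + phi e')) in *.
  assert (-1 <= c1 * c2 <= 1) by (split; nra).
  destruct (distinct_frequencies e e'); destruct (Rlt_dec (c1 * c2) 0); nra.
Qed.

Lemma many_opposite_signs (S : list I) :
  (forall e, In e S -> (1 <= J e)%nat) ->
  0 < adjacent_sum (fun e e' => indicator (distinct_frequencies e e')) S ->
  exists t, adjacent_sum (fun e e' => indicator (distinct_frequencies e e')) S / 16 <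
            adjacent_sum (fun e e' => indicator (opposite_signs (wave e t) (wave e' t))) S.
Proof.
  intros HS Hpos.
  set (ng := adjacent_sum (fun e e' => indicator (distinct_frequencies e e')) S) in *.
  assert (HI : is_RInt (fun t => adjacent_sum (fun e e' => pair_statistic e e' t) S) 0 (2 * PI)
                 (ng * (PI / 4))).
  { replace (ng * (PI / 4))
      with (adjacent_sum (fun e e' => if distinct_frequencies e e' then PI / 4 else 0) S).
    - apply is_RInt_adjacent_sum. intros e e' He He'. apply integral_pair_statistic; auto.
    - unfold ng. clear. induction S as [|x [|y t] IH]; simpl; try ring.
      simpl in IH. rewrite IH. unfold indicator. destruct (distinct_frequencies x y); ring. }
  destruct (classic (exists t, ng / 16 < adjacent_sum (fun e e' => pair_statistic e e' t) S))
    as [[t Ht]|Hn].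
  - exists t. eapply Rlt_le_trans; [exact Ht|].
    apply adjacent_sum_le. intros e e' _ _. apply pair_statistic_le.
  - exfalso.
    assert (Hc := is_RInt_const_period (ng / 16) _ eq_refl).
    assert (Hle := is_RInt_le _ _ 0 (2 * PI) _ _ ltac:(assert (Hp := PI_RGT_0); lra) HI Hc).
    assert (Hle' : ng * (PI / 4) <= 2 * PI * (ng / 16)).
    { apply Hle. intros t _. apply Rnot_lt_le. intro Ht. apply Hn. exists t. exact Ht. }
    assert (Hp := PI_RGT_0). nra.
Qed.
End Averaging.
End CosineAverages.

Lemma Cpow_polar rho t j :
  Cpow (rho * cos t, rho * sin t) j = (rho ^ j * cos (INR j * t), rho ^ j * sin (INR j * t)).
Proof.
  induction j as [|j IH].
  - simpl. rewrite Rmult_0_l, cos_0, sin_0. f_equal; ring.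
  - simpl Cpow. rewrite IH. unfold Cmul; simpl fst; simpl snd.
    rewrite S_INR. replace ((INR j + 1) * t) with (t + INR j * t) by ring.
    rewrite cos_plus, sin_plus. f_equal; simpl; ring.
Qed.

Lemma Re_csum f n : Re (csum f n) = sum_f_R0 (fun j => Re (f j)) n.
Proof.
  induction n as [|n IH]; simpl; auto. unfold Re, Cadd in *; simpl. rewrite IH. auto.
Qed.

Definition rotated_coef (a : nat -> nat -> Cx) (t : R) (i j : nat) : R :=
  fst (a i j) * cos (INR j * t) - snd (a i j) * sin (INR j * t).

Lemma re_eval_polar a N rho t x :
  re_eval a N (rho * cos t, rho * sin t) x =
  sum_f_R0 (fun i => sum_f_R0 (fun j => rho ^ j * rotated_coef a t i j * x ^ i) N) N.
Proof.
  unfold re_eval, coef_at. apply sum_eq. intros i _.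
  rewrite Re_csum, Rmult_comm, scal_sum. apply sum_eq. intros j _.
  rewrite Cpow_polar. unfold Re, Cmul, rotated_coef; simpl. ring.
Qed.

Lemma rotated_coef_bound a t i j :
  Rabs (rotated_coef a t i j) <= Rabs (fst (a i j)) + Rabs (snd (a i j)).
Proof.
  unfold rotated_coef, Rminus. eapply Rle_trans; [apply Rabs_triang|].
  rewrite Rabs_Ropp, !Rabs_mult.
  assert (Rabs (cos (INR j * t)) <= 1) by (apply Rabs_le; apply COS_bound).
  assert (Rabs (sin (INR j * t)) <= 1) by (apply Rabs_le; apply SIN_bound).
  assert (0 <= Rabs (fst (a i j))) by apply Rabs_pos.
  assert (0 <= Rabs (snd (a i j))) by apply Rabs_pos.
  assert (0 <= Rabs (cos (INR j * t))) by apply Rabs_pos.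
  assert (0 <= Rabs (sin (INR j * t))) by apply Rabs_pos.
  nra.
Qed.

Lemma sum_abs_bound s n B : (forall i, (i <= n)%nat -> Rabs (s i) <= B) ->
  Rabs (sum_f_R0 s n) <= INR (S n) * B.
Proof.
  induction n as [|n IH]; intros H.
  - simpl. rewrite Rmult_1_l. apply H; lia.
  - simpl sum_f_R0. rewrite S_INR. eapply Rle_trans; [apply Rabs_triang|].
    assert (H1 := IH (fun i Hi => H i ltac:(lia))). assert (H2 := H (S n) ltac:(lia)). lra.
Qed.

Lemma sum_abs_bound_except s n iv B : (iv <= n)%nat ->
  (forall i, (i <= n)%nat -> i <> iv -> Rabs (s i) <= B) ->
  Rabs (sum_f_R0 s n - s iv) <= INR n * B.
Proof.
  induction n as [|n IH]; intros Hiv H.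
  - simpl. assert (iv = 0%nat) by lia. subst. rewrite Rminus_diag, Rabs_R0. lra.
  - simpl sum_f_R0. rewrite S_INR.
    destruct (Nat.eq_dec iv (S n)) as [E|E].
    + subst. replace (sum_f_R0 s n + s (S n) - s (S n)) with (sum_f_R0 s n) by ring.
      assert (H1 := sum_abs_bound s n B (fun i Hi => H i ltac:(lia) ltac:(lia))).
      rewrite S_INR in H1. lra.
    + replace (sum_f_R0 s n + s (S n) - s iv) with ((sum_f_R0 s n - s iv) + s (S n)) by ring.
      eapply Rle_trans; [apply Rabs_triang|].
      assert (H1 := IH ltac:(lia) (fun i Hi Hne => H i ltac:(lia) Hne)).
      assert (H2 := H (S n) ltac:(lia) ltac:(lia)). lra.
Qed.

Lemma double_sum_except (u : nat -> nat -> R) N iv jv B :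
  (iv <= N)%nat -> (jv <= N)%nat -> 0 <= B ->
  (forall i j, (i <= N)%nat -> (j <= N)%nat -> (i, j) <> (iv, jv) -> Rabs (u i j) <= B) ->
  Rabs (sum_f_R0 (fun i => sum_f_R0 (fun j => u i j) N) N - u iv jv)
    <= (INR N + 1) * (INR N + 1) * B.
Proof.
  intros Hi Hj HB H.
  assert (H1 : Rabs (sum_f_R0 (fun i => sum_f_R0 (fun j => u i j) N) N
                     - sum_f_R0 (fun j => u iv j) N) <= INR N * (INR (S N) * B)).
  { apply (sum_abs_bound_except (fun i => sum_f_R0 (fun j => u i j) N) N iv); auto.
    intros i Hi' Hne. apply sum_abs_bound. intros j Hj'. apply H; auto. congruence. }
  assert (H2 : Rabs (sum_f_R0 (fun j => u iv j) N - u iv jv) <= INR N * B).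
  { apply (sum_abs_bound_except (fun j => u iv j) N jv); auto.
    intros j Hj' Hne. apply H; auto. congruence. }
  rewrite S_INR in H1.
  eapply Rle_trans; [|apply Rle_trans with (INR N * ((INR N + 1) * B) + INR N * B)].
  - replace (sum_f_R0 (fun i => sum_f_R0 (fun j => u i j) N) N - u iv jv) with
      ((sum_f_R0 (fun i => sum_f_R0 (fun j => u i j) N) N - sum_f_R0 (fun j => u iv j) N) +
       (sum_f_R0 (fun j => u iv j) N - u iv jv)) by ring.
    apply Rabs_triang.
  - lra.
  - assert (0 <= INR N) by apply pos_INR. nra.
Qed.

Lemma powerRZ_pow T z n : T <> 0 -> powerRZ T z ^ n = powerRZ T (z * Z.of_nat n).
Proof.
  intros HT. induction n as [|n IH].
  - simpl. rewrite Z.mul_0_r. reflexivity.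
  - simpl pow. rewrite IH, <- powerRZ_add by auto. f_equal. lia.
Qed.

Lemma powerRZ_increasing T g G : 1 < T -> (g < G)%Z -> powerRZ T g < powerRZ T G.
Proof.
  intros HT Hg. rewrite !powerRZ_Rpower by lra. apply Rpower_lt; auto. apply IZR_lt; auto.
Qed.

Lemma powerRZ_nondecreasing T g G : 1 < T -> (g <= G)%Z -> powerRZ T g <= powerRZ T G.
Proof.
  intros HT Hg. destruct (Z.eq_dec g G) as [->|Hne]; [lra|].
  left. apply powerRZ_increasing; auto; lia.
Qed.

Lemma dominant_sign F c K T P : 0 < P -> 0 <= K ->
  Rabs (F - c * (T * P)) <= K * P -> K < Rabs c * T -> 0 < F * c.
Proof.
  intros HP HK HF Hc.
  assert (HKP : K * P < Rabs c * T * P) by (apply Rmult_lt_compat_r; auto).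
  assert (Hl1 := Rle_abs (F - c * (T * P))).
  assert (Hl2 := Rle_abs (- (F - c * (T * P)))). rewrite Rabs_Ropp in Hl2.
  destruct (Rle_dec 0 c) as [Hc0|Hc0].
  - rewrite Rabs_right in HKP by lra.
    assert (0 < c) by (destruct (Req_dec c 0) as [E|E]; [rewrite E in HKP; nra|lra]). nra.
  - rewrite Rabs_left in HKP by lra. nra.
Qed.

(* Evaluating Re f at x = T^e, y = T^w e^(it), where v uniquely maximizes
   e i + w j on the support: for T large the monomial of v dominates, so the
   value has the sign of Re(a_v e^(i j_v t)). *)
Lemma value_sign_at_vertex a N (e w : Z) v t T A :
  bounded_coefs a N -> support a v -> maximizes_uniquely a e w v -> 1 < T ->
  (forall i j, (i <= N)%nat -> (j <= N)%nat -> Rabs (fst (a i j)) + Rabs (snd (a i j)) <= A) ->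
  (INR N + 1) * (INR N + 1) * A < Rabs (rotated_coef a t (fst v) (snd v)) * T ->
  0 < re_eval a N (powerRZ T w * cos t, powerRZ T w * sin t) (powerRZ T e)
      * rotated_coef a t (fst v) (snd v).
Proof.
  intros Hb Hs He HT HAb Hc.
  destruct (support_bounded a N v Hb Hs) as [Hv1 Hv2].
  assert (HA : 0 <= A) by (specialize (HAb 0%nat 0%nat ltac:(lia) ltac:(lia));
                           assert (H0 := Rabs_pos (fst (a 0%nat 0%nat)));
                           assert (H1 := Rabs_pos (snd (a 0%nat 0%nat))); lra).
  set (g := fun i j => (e * Z.of_nat i + w * Z.of_nat j)%Z).
  set (G := g (fst v) (snd v)).
  set (P := powerRZ T (G - 1)).
  assert (HP : 0 < P) by (apply powerRZ_lt; lra).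
  rewrite re_eval_polar.
  assert (Hterm : forall i j, powerRZ T w ^ j * rotated_coef a t i j * powerRZ T e ^ i
                               = rotated_coef a t i j * powerRZ T (g i j)).
  { intros i j. rewrite !powerRZ_pow by lra. unfold g. rewrite powerRZ_add by lra. ring. }
  erewrite sum_eq; [|intros i _; apply sum_eq; intros j _; apply Hterm].
  apply (dominant_sign _ _ ((INR N + 1) * (INR N + 1) * A) T P); auto.
  - assert (0 <= INR N) by apply pos_INR. apply Rmult_le_pos; [nra|auto].
  - replace (rotated_coef a t (fst v) (snd v) * (T * P))
      with (rotated_coef a t (fst v) (snd v) * powerRZ T (g (fst v) (snd v))).
    2:{ unfold P, G. replace (g (fst v) (snd v)) with (1 + (g (fst v) (snd v) - 1))%Z at 1 by lia.
        rewrite powerRZ_add by lra. simpl. ring. }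
    rewrite Rmult_assoc.
    apply (double_sum_except (fun i j => rotated_coef a t i j * powerRZ T (g i j)));
      auto; [apply Rmult_le_pos; lra|].
    intros i j Hi Hj Hne. rewrite Rabs_mult.
    rewrite (Rabs_right (powerRZ T (g i j))) by (apply Rle_ge, powerRZ_le; lra).
    destruct (Cx_eq_dec (a i j) C0) as [Z0|NZ].
    + assert (rotated_coef a t i j = 0) by (unfold rotated_coef; rewrite Z0; simpl; ring).
      rewrite H, Rabs_R0, Rmult_0_l. apply Rmult_le_pos; lra.
    + assert (Hg : (g i j <= G - 1)%Z).
      { assert (Hq : (i, j) <> v) by (destruct v; simpl in *; auto).
        specialize (He (i, j) NZ Hq). unfold G, g. simpl in He. lia. }
      apply Rmult_le_compat; [apply Rabs_pos|apply powerRZ_le; lra| |].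
      * eapply Rle_trans; [apply rotated_coef_bound|apply HAb; auto].
      * apply powerRZ_nondecreasing; auto.
Qed.

Lemma off_axis_vertices a k : newton_num_vertices a k ->
  exists l, NoDup l /\ (forall p, In p l -> newton_vertex a p /\ snd p <> 0%nat) /\
    (k <= length l + 2)%nat.
Proof.
  intros [l [Hnd [Hlen Hiff]]].
  assert (Hv : forall p, In p l -> newton_vertex a p) by (intros; apply Hiff; auto).
  exists (filter (fun p => negb (Nat.eqb (snd p) 0)) l). split; [|split].
  - apply NoDup_filter; auto.
  - intros p Hp. apply filter_In in Hp as [H1 H2]. split; auto.
    apply Bool.negb_true_iff, Nat.eqb_neq in H2. auto.
  - assert (H := at_most_two_vertices_on_row a 0 l Hnd Hv).
    assert (Hsplit : forall (f : nat * nat -> bool) (m : list (nat * nat)),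
               length m = (length (filter f m) + length (filter (fun x => negb (f x)) m))%nat).
    { intros f m. induction m as [|x m IH]; simpl; auto. destruct (f x); simpl; lia. }
    specialize (Hsplit (fun p => Nat.eqb (snd p) 0) l). lia.
Qed.

Definition vertex_chain (a : nat -> nat -> Cx) (w : Z) (S : list Z) (V : Z -> nat * nat) : Prop :=
  StronglySorted Z.lt S /\ forall e, In e S ->
    support a (V e) /\ (1 <= snd (V e))%nat /\ maximizes_uniquely a e w (V e).

Definition chain_rows (V : Z -> nat * nat) (e : Z) : nat := snd (V e).

Definition distinct_row_pairs (V : Z -> nat * nat) (S : list Z) : R :=
  adjacent_sum (fun e e' => indicator (CosineAverages.distinct_frequencies Z (chain_rows V) e e')) S.

Lemma long_vertex_chain a N l : bounded_coefs a N -> NoDup l ->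
  (forall p, In p l -> newton_vertex a p /\ snd p <> 0%nat) ->
  exists w S V, vertex_chain a w S V /\ (length l <= 2 * length S)%nat /\
    INR (length S) - 2 <= distinct_row_pairs V S.
Proof.
  intros Hb Hnd Hl.
  destruct (large_sign_class a N l Hb Hnd (fun p Hp => proj1 (Hl p Hp)))
    as [w [U [HUnd [HUinc [HUlen HUex]]]]].
  assert (HUs : forall v, In v U -> support a v /\ snd v <> 0%nat).
  { intros v Hv. destruct (Hl v (HUinc v Hv)) as [[Hs _] Hj]. auto. }
  destruct (exponent_chain a w U HUnd (fun v Hv => proj1 (HUs v Hv)) HUex)
    as [S [V [HSs [HSlen [HSV HSd]]]]].
  exists w, S, V. split; [split; auto|split; [lia|]].
  - intros e He. destruct (HSV e He) as [HVU Hmax]. destruct (HUs _ HVU).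
    repeat split; auto; lia.
  - apply Rge_le, good_adjacent_pairs; auto. intros e e' He He' Hlt Hg.
    unfold CosineAverages.distinct_frequencies, chain_rows in Hg.
    apply Bool.negb_false_iff, Nat.eqb_eq in Hg.
    destruct (HSV e He) as [HVU He1]. destruct (HSV e' He') as [HVU' He2].
    apply (same_row_exponents_straddle_zero a e e' w (V e) (V e')); auto.
    + apply HUs; auto.
    + apply HUs; auto.
    + apply HSd; auto; lia.
Qed.

Lemma dominant_signs_along_chain a N w S V t : bounded_coefs a N -> vertex_chain a w S V ->
  exists T, 1 < T /\ forall e, In e S ->
    rotated_coef a t (fst (V e)) (snd (V e)) <> 0 ->
    0 < re_eval a N (powerRZ T w * cos t, powerRZ T w * sin t) (powerRZ T e)
        * rotated_coef a t (fst (V e)) (snd (V e)).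
Proof.
  intros Hb [_ HS].
  destruct (exists_strict_upper_bound
              (fun p : nat * nat => Rabs (fst (a (fst p) (snd p))) + Rabs (snd (a (fst p) (snd p))))
              (grid N)) as [A HA].
  destruct (exists_strict_upper_bound (fun e => (INR N + 1) * (INR N + 1) * A
              / Rabs (rotated_coef a t (fst (V e)) (snd (V e)))) S) as [T0 HT0].
  exists (Rmax 2 T0). split; [eapply Rlt_le_trans; [|apply Rmax_l]; lra|].
  intros e He Hc. destruct (HS e He) as [Hs [_ Hmax]].
  apply (value_sign_at_vertex a N e w (V e) t _ A); auto.
  - eapply Rlt_le_trans; [|apply Rmax_l]; lra.
  - intros i j Hi Hj. left. apply (HA (i, j)), in_grid; auto.
  - assert (Hpos : 0 < Rabs (rotated_coef a t (fst (V e)) (snd (V e)))) by (apply Rabs_pos_lt; auto).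
    specialize (HT0 e He). simpl in HT0.
    apply (Rmult_lt_compat_r (Rabs (rotated_coef a t (fst (V e)) (snd (V e))))) in HT0; auto.
    unfold Rdiv in HT0. rewrite Rmult_assoc, Rinv_l, Rmult_1_r in HT0 by lra.
    assert (T0 <= Rmax 2 T0) by apply Rmax_r. nra.
Qed.

Lemma opposite_signs_transfer x y u v ru rv : 0 < ru -> 0 < rv ->
  (u <> 0 -> 0 < x * (ru * u)) -> (v <> 0 -> 0 < y * (rv * v)) ->
  indicator (opposite_signs u v) <= indicator (opposite_signs x y).
Proof.
  intros Hru Hrv Hx Hy. unfold indicator, opposite_signs.
  destruct (Rlt_dec (u * v) 0) as [L|L]; destruct (Rlt_dec (x * y) 0) as [L'|L']; try lra.
  exfalso. apply L'.
  assert (Hu : u <> 0) by (intro E; rewrite E in L; lra).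
  assert (Hv : v <> 0) by (intro E; rewrite E in L; lra).
  specialize (Hx Hu). specialize (Hy Hv).
  assert (0 < (x * (ru * u)) * (y * (rv * v))) by (apply Rmult_lt_0_compat; auto).
  assert (0 < ru * rv) by (apply Rmult_lt_0_compat; auto).
  assert (Hneg : (ru * rv) * (u * v) < 0) by nra.
  replace (x * (ru * u) * (y * (rv * v))) with ((x * y) * ((ru * rv) * (u * v))) in H by ring.
  nra.
Qed.

Lemma polar_point_nonzero rho t : 0 < rho -> (rho * cos t, rho * sin t) <> C0.
Proof.
  intros Hr E. inversion E as [[Ea Eb]].
  assert (C := sin2_cos2 t). unfold Rsqr in C.
  assert (cos t = 0) by (apply (Rmult_eq_reg_l rho); lra).
  assert (sin t = 0) by (apply (Rmult_eq_reg_l rho); lra). nra.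
Qed.

Lemma roots_along_chain a N w S V : bounded_coefs a N -> vertex_chain a w S V ->
  0 < distinct_row_pairs V S ->
  exists y0, y0 <> C0 /\ exists roots : list R, NoDup roots /\
    distinct_row_pairs V S / 16 < INR (length roots) /\
    Forall (fun r => re_eval a N y0 r = 0) roots.
Proof.
  intros Hb Hchain Hpos. pose proof Hchain as [HSs HS].
  set (A e := fst (a (fst (V e)) (snd (V e)))). set (B e := snd (a (fst (V e)) (snd (V e)))).
  assert (HAB : forall e, In e S -> ~ (A e = 0 /\ B e = 0)).
  { intros e He [E1 E2]. destruct (HS e He) as [Hs _]. apply Hs. unfold A, B in *.
    destruct (a (fst (V e)) (snd (V e))); simpl in *; subst; reflexivity. }
  set (phi e := polar_angle (A e) (B e)).
  destruct (CosineAverages.many_opposite_signs Z (chain_rows V) phi S) as [t Ht]; auto.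
  { intros e He. apply (HS e He). }
  destruct (dominant_signs_along_chain a N w S V t Hb Hchain) as [T [HT Hsign]].
  set (y0 := (powerRZ T w * cos t, powerRZ T w * sin t)).
  set (F := re_eval a N y0).
  assert (HFc : continuity F) by (unfold F, re_eval; apply continuity_finite_sum).
  destruct S as [|e0 S']; [unfold distinct_row_pairs in Hpos; simpl in Hpos; lra|].
  destruct (roots_from_sign_changes F (fun e => powerRZ T e) HFc
              (fun e e' H => powerRZ_increasing T e e' HT H) S' e0 HSs)
    as [roots [R1 [R2 [R3 _]]]].
  exists y0. split; [apply polar_point_nonzero, powerRZ_lt; lra|].
  exists roots. split; [auto|split; [|exact R2]].
  eapply Rlt_le_trans; [exact Ht|]. eapply Rle_trans; [|exact R3].
  (* Re(a_(V e) e^(i j t)) = r_e wave_e(t) with r_e > 0, and it gives the sign of F (T^e) *)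
  assert (Hsame : forall e, In e (e0 :: S') ->
    CosineAverages.wave Z (chain_rows V) phi e t <> 0 ->
    0 < F (powerRZ T e) * (sqrt (A e * A e + B e * B e) * CosineAverages.wave Z (chain_rows V) phi e t)).
  { intros e He Hne. destruct (polar_form _ _ (HAB e He)) as [Hr _].
    unfold CosineAverages.wave, chain_rows, phi in *.
    rewrite <- (harmonic_polar (A e) (B e) (snd (V e)) t (HAB e He)).
    apply Hsign; auto.
    change (A e * cos (INR (snd (V e)) * t) - B e * sin (INR (snd (V e)) * t) <> 0).
    rewrite harmonic_polar by (apply HAB; auto).
    apply Rmult_integral_contrapositive_currified; lra. }
  apply adjacent_sum_le. intros e e' He He'.
  apply (opposite_signs_transfer _ _ _ _ (sqrt (A e * A e + B e * B e))
           (sqrt (A e' * A e' + B e' * B e'))); auto.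
  - apply (polar_form _ _ (HAB e He)).
  - apply (polar_form _ _ (HAB e' He')).
Qed.

Theorem theorem2p3 :
  exists (c : R) (k0 : nat), 0 < c /\
    forall (k : nat), (k0 <= k)%nat ->
    forall (N : nat) (a : nat -> nat -> Cx),
      bounded_coefs a N ->
      newton_num_vertices a k ->
      exists y0 : Cx, y0 <> C0 /\
        exists roots : list R,
          NoDup roots /\
          c * INR k <= INR (length roots) /\
          Forall (fun r => re_eval a N y0 r = 0) roots.
Proof.
  exists (1/64), 12%nat. split; [lra|].
  intros k Hk N a Hb Hk_vertices.
  destruct (off_axis_vertices a k Hk_vertices) as [l [Hnd [Hl Hlen]]].
  destruct (long_vertex_chain a N l Hb Hnd Hl) as [w [S [V [Hchain [HSlen Hgood]]]]].
  set (ng := distinct_row_pairs V S) in Hgood.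
  (* k <= |l| + 2 <= 2 |S| + 2 and ng >= |S| - 2, so ng >= (k - 6)/2 > 0 *)
  assert (HkS : INR k <= 2 * INR (length S) + 2).
  { assert (H : (k <= 2 * length S + 2)%nat) by lia.
    apply le_INR in H. rewrite plus_INR, mult_INR in H. simpl in H. lra. }
  assert (Hk12 : 12 <= INR k) by (apply le_INR in Hk; simpl in Hk; lra).
  destruct (roots_along_chain a N w S V Hb Hchain ltac:(fold ng; lra))
    as [y0 [Hy0 [roots [Hroots [Hcount Hzero]]]]].
  exists y0. split; auto. exists roots. split; [auto|split; [|auto]].
  fold ng in Hcount. lra.
Qed.
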